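(* Let $\mathcal{A}_1,\mathcal{A}_2$ be tautological algebras with maximal ideals $\mathfrak{m}_1,\mathfrak{m}_2$, and let $M_1,M_2\in\mathrm{Mat}_{2n}(\mathbb{C})$ be their structure matrices with respect to symplectic bases $\{X^1_1,\dots,X^1_{2n},t_1\}$ of $\mathfrak{m}_1$ and $\{X^2_1,\dots,X^2_{2n},t_2\}$ of $\mathfrak{m}_2$. Then $\mathcal{A}_1\cong\mathcal{A}_2$ (as unital algebras) if and only if there exists an invertible matrix $C\in\mathrm{GL}_{2n}(\mathbb{C})$ with $M_1=C\,M_2\,C^t$.
   Context: Work over $\mathbb{C}$, $n\ge1$. The Heisenberg group $\mathbb{H}_{2n+1}$ is $\mathbb{W}\times\mathbb{C}$ ($\mathbb{W}$ a $2n$-dimensional space with non-degenerate skew form $\omega$) with law $(w_1,t_1)(w_2,t_2)=(w_1+w_2,t_1+t_2+\tfrac12\omega(w_1,w_2))$; $T=(0,1)$, $\mathbb{I}=\mathbb{C}T$ its center. An $\mathbb{H}_{2n+1}$-structure on $\mathbb{P}V$, $V\cong\mathbb{C}^{2n+2}$, is an effective algebraic action with dense open orbit; the boundary is a hyperplane $\mathbb{P}V'$. Viewing $\mathbb{H}_{2n+1}\subset\mathbb{P}\mathrm{GL}_{2n+2}(\mathbb{C})$ and $\pi:\mathrm{GL}_{2n+2}\to\mathbb{P}\mathrm{GL}_{2n+2}$ the projection, the associated algebra $\mathcal{A}$ is the unital subalgebra of $\mathrm{Mat}_{2n+2}(\mathbb{C})$ generated by $\pi^{-1}(\mathbb{H}_{2n+1})$.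 For $o$ in the open orbit let $v=\overline{\mathbb{I}\cdot o}\setminus\mathbb{I}\cdot o$, $\hat v$ a representative, $\widetilde V=V/\mathbb{C}\hat v$; if $T$ fixes $\mathbb{P}V'$ pointwise, the action descends to a $\mathbb{G}_a^{2n}$-structure of $\mathbb{H}_{2n+1}/\mathbb{I}$ on $\mathbb{P}\widetilde V$, called tautological if in suitable coordinates it is $(a_i)\cdot[z_0,\dots,z_{2n}]=[z_0,z_1+a_1z_0,\dots,z_{2n}+a_{2n}z_0]$. A tautological algebra is the associated algebra of an $\mathbb{H}_{2n+1}$-structure for which $T$ fixes the boundary pointwise and the induced structure is tautological. For such $\mathcal{A}$ one has $\mathcal{A}=\mathbb{C}I_{2n+2}\oplus\mathfrak{m}$, where the maximal ideal $\mathfrak{m}$ is the (matrix realization of the) Lie algebra of $\mathbb{H}_{2n+1}$, a Heisenberg Lie algebra with center $\mathbb{C}t$ under the commutator bracket. A symplectic basis of $\mathfrak{m}$ is a basis $X_1,\dots,X_{2n},t$ with $X_iX_j-X_jX_i=\omega(X_i,X_j)t$, where $\omega(X_i,X_{n+j})=\delta_{ij}$ and $\omega(X_i,X_j)=\omega(X_{n+i},X_{n+j})=0$ for $1\le i,j\le n$. In such a basis each product $X_iX_j$ lies in $\mathbb{C}t$, say $X_iX_j=a_{ij}t$, and the structure matrix is $M_{\mathcal{A}}=(a_{ij})\in\mathrm{Mat}_{2n}(\mathbb{C})$. *)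

(* The ground field C is  R[i]  (complex numbers over a
   realType R, from mathcomp-real-closed); the generic definitions below are
   stated over an arbitrary field F and instantiated at F := R[i]. *)
From mathcomp Require Import all_boot all_algebra.
From mathcomp Require Import reals complex.
Set Implicit Arguments.
Unset Strict Implicit.
Unset Printing Implicit Defensive.
Import GRing.Theory Num.Theory.
Local Open Scope ring_scope.

Inductive polyfun (F : fieldType) (a b : nat) : ('M[F]_(a, b) -> F) -> Prop :=
  | pf_const (c : F) : polyfun (fun _ => c)
  | pf_coord (i : 'I_a) (j : 'I_b) : polyfun (fun x => x i j)
  | pf_add f g : polyfun f -> polyfun g -> polyfun (fun x => f x + g x)
  | pf_mul f g : polyfun f -> polyfun g -> polyfun (fun x => f x * g x).

Definition homog_polyfun (F : fieldType) (N : nat) (f : 'cV[F]_N -> F) : Prop :=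
  polyfun f /\ exists d : nat, forall (c : F) x, f (c *: x) = c ^+ d * f x.

(* Subsets of P(F^N) are represented by scale-invariant sets of nonzero
   column vectors (a point [x] of P(F^N) <-> the line F^* x). *)
Definition zclosed (F : fieldType) (N : nat) (Z : 'cV[F]_N -> Prop) : Prop :=
  exists S : ('cV[F]_N -> F) -> Prop,
    (forall f, S f -> homog_polyfun f) /\
    (forall x, x != 0 -> (Z x <-> forall f, S f -> f x = 0)).

Definition zopen (F : fieldType) (N : nat) (U : 'cV[F]_N -> Prop) : Prop :=
  zclosed (fun x => ~ U x).

Definition in_zclosure (F : fieldType) (N : nat) (S : 'cV[F]_N -> Prop)
    (x : 'cV[F]_N) : Prop :=
  x != 0 /\ forall Z, zclosed Z -> (forall y, y != 0 -> S y -> Z y) -> Z x.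

Definition zdense (F : fieldType) (N : nat) (S : 'cV[F]_N -> Prop) : Prop :=
  forall x, x != 0 -> in_zclosure S x.

Definition Jstd (F : fieldType) (n : nat) : 'M[F]_(n + n) :=
  block_mx 0 1%:M (- 1%:M) 0.

Definition omega (F : fieldType) (n : nat) (w1 w2 : 'rV[F]_(n + n)) : F :=
  (w1 *m Jstd F n *m w2^T) 0 0.

(* A (lifted) representation phi : H_{2n+1} -> GL(V), V = F^{2n+2},
   phi w t = image of (w,t). *)
Definition heis_rep (F : fieldType) (n : nat) :=
  'rV[F]_(n + n) -> F -> 'M[F]_((n + n).+2).

Definition orbit (F : fieldType) (n : nat) (phi : heis_rep F n)
    (x : 'cV[F]_((n + n).+2)) (y : 'cV[F]_((n + n).+2)) : Prop :=
  exists w t (c : F), c != 0 /\ y = c *: (phi w t *m x).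

Definition center_orbit (F : fieldType) (n : nat) (phi : heis_rep F n)
    (x : 'cV[F]_((n + n).+2)) (y : 'cV[F]_((n + n).+2)) : Prop :=
  exists s (c : F), c != 0 /\ y = c *: (phi 0 s *m x).

(* An H_{2n+1}-structure on P(V): an effective algebraic action with a dense
   open orbit.  The action is given through a lift phi to GL(V) which is a
   morphism of algebraic groups. *)
Definition H_structure (F : fieldType) (n : nat) (phi : heis_rep F n) : Prop :=
  (forall i j, polyfun (fun v : 'rV[F]_(n + n + 1) =>
                          phi (lsubmx v) (rsubmx v 0 0) i j)) /\
  phi 0 0 = 1 /\
  (forall w1 t1 w2 t2,
      phi (w1 + w2) (t1 + t2 + omega w1 w2 / 2) = phi w1 t1 *m phi w2 t2) /\
  (forall w t, (exists c : F, phi w t = c%:M) -> w = 0 /\ t = 0) /\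
  (exists o, o != 0 /\ zopen (orbit phi o) /\ zdense (orbit phi o)).

(* Standard tautological matrix on F^{2n+1} (column vectors):
   (a_i).[z_0,...,z_{2n}] = [z_0, z_1 + a_1 z_0, ..., z_{2n} + a_{2n} z_0]. *)
Definition taut_mx (F : fieldType) (n : nat) (a : 'rV[F]_(n + n)) :
    'M[F]_((n + n).+1) :=
  \matrix_(i, j) ((i == j)%:R +
     (if (j == ord0) then (if unlift ord0 i is Some k then a 0 k else 0)
      else 0)).

Definition tautological_structure (F : fieldType) (n : nat) (phi : heis_rep F n)
    : Prop :=
  H_structure phi /\
  exists o, o != 0 /\ zopen (orbit phi o) /\ zdense (orbit phi o) /\
  (forall x, x != 0 -> ~ orbit phi o x ->
             exists c : F, phi 0 1 *m x = c *: x) /\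
  exists vhat : 'cV[F]_((n + n).+2), vhat != 0 /\
    (forall y, y != 0 ->
       (in_zclosure (center_orbit phi o) y /\ ~ center_orbit phi o y) <->
       (exists c : F, c != 0 /\ y = c *: vhat)) /\
    (forall w t, exists c : F, phi w t *m vhat = c *: vhat) /\
    (* in suitable coordinates (a linear surjection P : V -> F^{2n+1} with
       kernel F vhat, and linear coordinates L on H/I = W) the induced action
       on P(V / F vhat) is the tautological one *)
    exists (P : 'M[F]_((n + n).+1, (n + n).+2)) (L : 'M[F]_(n + n)),
      \rank P = (n + n).+1 /\ P *m vhat = 0 /\ L \in unitmx /\
      forall w t, exists c : F, c != 0 /\
        P *m phi w t = c *: (taut_mx (w *m L) *m P).

(* The associated algebra: the unital subalgebra of Mat_{2n+2}(F) generated
   by pi^{-1}(image of H) = { c phi(g) | c <> 0 }. *)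
Inductive assoc_alg (F : fieldType) (n : nat) (phi : heis_rep F n) :
    'M[F]_((n + n).+2) -> Prop :=
  | aa_gen w t (c : F) : c != 0 -> assoc_alg phi (c *: phi w t)
  | aa_one : assoc_alg phi 1
  | aa_add A B : assoc_alg phi A -> assoc_alg phi B -> assoc_alg phi (A + B)
  | aa_scale (c : F) A : assoc_alg phi A -> assoc_alg phi (c *: A)
  | aa_mul A B : assoc_alg phi A -> assoc_alg phi B -> assoc_alg phi (A *m B).

Definition tautological_algebra (F : fieldType) (n : nat)
    (A : 'M[F]_((n + n).+2) -> Prop) : Prop :=
  exists phi : heis_rep F n, tautological_structure phi /\
    forall M, A M <-> assoc_alg phi M.

Definition is_ideal (F : fieldType) (N : nat) (A I : 'M[F]_N -> Prop) : Prop :=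
  (forall x, I x -> A x) /\ I 0 /\
  (forall x y, I x -> I y -> I (x + y)) /\
  (forall (c : F) x, I x -> I (c *: x)) /\
  (forall a x, A a -> I x -> I (a *m x) /\ I (x *m a)).

Definition is_proper_ideal (F : fieldType) (N : nat) (A I : 'M[F]_N -> Prop) :=
  is_ideal A I /\ exists a, A a /\ ~ I a.

Definition is_maximal_ideal (F : fieldType) (N : nat) (A I : 'M[F]_N -> Prop) :=
  is_proper_ideal A I /\
  forall J, is_proper_ideal A J -> (forall x, I x -> J x) ->
            forall x, J x -> I x.

Definition symplectic_basis (F : fieldType) (n : nat)
    (m : 'M[F]_((n + n).+2) -> Prop)
    (X : 'I_(n + n) -> 'M[F]_((n + n).+2)) (t : 'M[F]_((n + n).+2)) : Prop :=
  (forall i, m (X i)) /\ m t /\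
  (forall (c : 'I_(n + n) -> F) (d : F),
      \sum_i c i *: X i + d *: t = 0 -> (forall i, c i = 0) /\ d = 0) /\
  (forall Y, m Y -> exists (c : 'I_(n + n) -> F) (d : F),
      Y = \sum_i c i *: X i + d *: t) /\
  (forall i j, X i *m X j - X j *m X i = Jstd F n i j *: t).

Definition alg_isomorphic (F : fieldType) (N : nat) (A1 A2 : 'M[F]_N -> Prop)
    : Prop :=
  exists f : 'M[F]_N -> 'M[F]_N,
    (forall x, A1 x -> A2 (f x)) /\
    (forall x y, A1 x -> A1 y -> f x = f y -> x = y) /\
    (forall z, A2 z -> exists x, A1 x /\ f x = z) /\
    (forall x y, A1 x -> A1 y -> f (x + y) = f x + f y) /\
    (forall (c : F) x, A1 x -> f (c *: x) = c *: f x) /\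
    (forall x y, A1 x -> A1 y -> f (x *m y) = f x *m f y) /\
    f 1 = 1.

(* Only the fact that a tautological algebra A is a unital subalgebra of
   matrices matters.  The elements a of A with a t = 0 form a proper ideal
   containing m, hence equal to m; as a t is always a multiple of t, every
   element of A is g 1 + sum_i c_i X_i + d t.  Associativity of the products
   X_i X_j X_k, for a pair with [X_a, X_b] = t, forces t m = m t = 0, so in
   these coordinates
     (g, c, d) (g', c', d') = (g g', g c' + g' c, g d' + g' d + c M c'^T).
   Hence a congruence M1 = C M2 C^T yields the isomorphism
   (g, c, d) |-> (g, c C, d).  Conversely an isomorphism f maps the nilpotent
   ideal m1 into m2 and t1 to some lam t2 with lam <> 0; comparing f (X_i X_j)
   with f X_i f X_j gives lam M1 = C M2 C^T for the matrix C of f on the X_i,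
   which is invertible since f is injective, and a square root of lam absorbs
   the scalar. *)

From mathcomp Require Import all_boot all_algebra.
From mathcomp Require Import reals complex.
From mathcomp Require Import ring.
From Stdlib Require Import ClassicalEpsilon.
Import GRing.Theory Num.Theory.
Local Open Scope ring_scope.
Set Implicit Arguments.
Unset Strict Implicit.
Unset Printing Implicit Defensive.

Lemma injective_has_left_inverse (T U : Type) (x0 : T) (h : T -> U) :
  injective h -> exists g : U -> T, cancel h g.
Proof.
move=> h_inj; exists (fun y => epsilon (inhabits x0) (fun x => h x = y)) => x.
apply: h_inj; apply: (epsilon_spec (inhabits x0) (fun x' => h x' = h x)).
by exists x.
Qed.

Section Ideals.

Variables (F : fieldType) (N : nat) (A I : 'M[F]_N -> Prop).
Hypothesis I_ideal : is_ideal A I.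

Lemma ideal_sub x : I x -> A x.
Proof. by case: I_ideal => sub _; apply: sub. Qed.

Lemma ideal0 : I 0.
Proof. by case: I_ideal => _ []. Qed.

Lemma idealD x y : I x -> I y -> I (x + y).
Proof. by case: I_ideal => _ [_ [addI _]]; apply: addI. Qed.

Lemma idealZ c x : I x -> I (c *: x).
Proof. by case: I_ideal => _ [_ [_ [scaleI _]]]; apply: scaleI. Qed.

Lemma idealMl a x : A a -> I x -> I (a *m x).
Proof.
by case: I_ideal => _ [_ [_ [_ mulI]]] Aa Ix; case: (mulI a x Aa Ix).
Qed.

Lemma idealMr a x : A a -> I x -> I (x *m a).
Proof.
by case: I_ideal => _ [_ [_ [_ mulI]]] Aa Ix; case: (mulI a x Aa Ix).
Qed.

End Ideals.

Section Combinations.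

Variables (F : fieldType) (k N : nat) (X : 'I_k -> 'M[F]_N) (t : 'M[F]_N).

Definition hcomb (g : F) (c : 'rV[F]_k) (d : F) : 'M[F]_N :=
  g%:M + \sum_i c 0 i *: X i + d *: t.

Lemma hcombE g c d : hcomb g c d = g%:M + hcomb 0 c d.
Proof. by rewrite /hcomb raddf0 add0r !addrA. Qed.

Lemma hcomb0l c d : hcomb 0 c d = \sum_i c 0 i *: X i + d *: t.
Proof. by rewrite /hcomb raddf0 add0r. Qed.

Lemma hcombD g c d g' c' d' :
  hcomb g c d + hcomb g' c' d' = hcomb (g + g') (c + c') (d + d').
Proof.
rewrite /hcomb raddfD /= scalerDl addrACA [X in X + _ = _]addrACA -big_split /=.
by congr (_ + _ + _); apply: eq_bigr => i _; rewrite mxE scalerDl.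
Qed.

Lemma hcombZ a g c d : a *: hcomb g c d = hcomb (a * g) (a *: c) (a * d).
Proof.
rewrite /hcomb !scalerDr -scalemx1 scalerA scalemx1 scaler_sumr scalerA.
by congr (_ + _ + _); apply: eq_bigr => i _; rewrite mxE scalerA.
Qed.

Lemma hcomb_scalar g : hcomb g 0 0 = g%:M.
Proof.
by rewrite /hcomb big1 ?scale0r ?addr0 // => i _; rewrite mxE scale0r.
Qed.

Lemma hcomb_center d : hcomb 0 0 d = d *: t.
Proof. by rewrite hcomb0l big1 ?add0r // => i _; rewrite mxE scale0r. Qed.

Lemma hcomb0 : hcomb 0 0 0 = 0.
Proof. by rewrite hcomb_scalar raddf0. Qed.

Lemma hcomb_sum (I : finType) (g : I -> F) c d :
  \sum_i hcomb (g i) (c i) (d i) = hcomb (\sum_i g i) (\sum_i c i) (\sum_i d i).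
Proof.
elim: (index_enum I) => [|i r IH]; first by rewrite !big_nil hcomb0.
by rewrite !big_cons IH hcombD.
Qed.

End Combinations.

(* For a pair a, b with [X a, X b] = t, and p = M a a, s = M b a,
   s + 1 = M a b, u = M b b, these are the associativity relations
   M i j (t X k) = M j k (X i t), i, j, k in {a, b}, read at one entry of
   t X a, t X b, X a t and X b t respectively. *)
Lemma heis_assoc_system_eq0 (F : fieldType) (p s u x y z w : F) :
  p * x = p * z -> p * y = (s + 1) * z -> (s + 1) * x = s * z ->
  (s + 1) * y = u * z -> s * x = p * w -> s * y = (s + 1) * w ->
  u * x = s * w -> u * y = u * w ->
  [/\ x = 0, y = 0, z = 0 & w = 0].
Proof.
move=> e1 e2 e3 e4 e5 e6 e7 e8.
have sz : s * z = 0.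
  have e : s * (s * z) = s * ((s + 1) * z).
    by rewrite -e3 mulrCA e5 mulrCA -e6 mulrCA e2.
  have -> : s * z = s * ((s + 1) * z) - s * (s * z) by ring.
  by rewrite e subrr.
have qx : (s + 1) * x = 0 by rewrite e3.
have ssy : s * (s * y) = 0 by rewrite e6 mulrCA -e7 mulrCA qx mulr0.
have qqw : (s + 1) * ((s + 1) * w) = 0 by rewrite -e6 mulrCA e4 mulrCA sz mulr0.
have [s0 | s_neq0] := eqVneq s 0.
  move: e1 e2 e4 qx qqw; rewrite s0 add0r !mul1r => e1 e2 e4 x0 w0.
  have z0 : z = 0 by rewrite -e2 e4 mulrCA -e1 x0 !mulr0.
  by split=> //; rewrite e4 z0 mulr0.
have z0 : z = 0 by apply: (mulfI s_neq0); rewrite sz mulr0.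
have y0 : y = 0 by move/eqP: ssy; rewrite !mulf_eq0 (negbTE s_neq0) => /eqP.
have px : p * x = 0 by rewrite e1 z0 mulr0.
have x0 : x = 0.
  have : s * (s * x) = 0 by rewrite e5 mulrCA -e7 mulrCA px mulr0.
  by move/eqP; rewrite !mulf_eq0 (negbTE s_neq0) => /eqP.
by split=> //; apply: (mulfI s_neq0); rewrite -e7 x0 !mulr0.
Qed.

Record subalgebra (F : fieldType) (N : nat) (A : 'M[F]_N -> Prop) : Prop :=
  Subalgebra {
    subalg1 : A 1;
    subalgD : forall x y, A x -> A y -> A (x + y);
    subalgZ : forall (c : F) x, A x -> A (c *: x);
    subalgM : forall x y, A x -> A y -> A (x *m y) }.

Lemma subalg0 (F : fieldType) (N : nat) (A : 'M[F]_N -> Prop) :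
  subalgebra A -> A 0.
Proof.
move=> A_subalg; rewrite -(scale0r (1 : 'M[F]_N)).
exact: (subalgZ A_subalg _ (subalg1 A_subalg)).
Qed.

Record presentation (F : fieldType) (n : nat) (A m : 'M[F]_((n + n).+2) -> Prop)
    (X : 'I_(n + n) -> 'M[F]_((n + n).+2)) (t : 'M[F]_((n + n).+2))
    (M : 'M[F]_(n + n)) : Prop :=
  Presentation {
    presentation_n_gt0 : (0 < n)%N;
    presentation_subalg : subalgebra A;
    presentation_max : is_maximal_ideal A m;
    presentation_basis : symplectic_basis m X t;
    presentation_struct : forall i j, X i *m X j = M i j *: t }.

Section Presentation.

Variables (F : fieldType) (n : nat) (A m : 'M[F]_((n + n).+2) -> Prop).
Variables (X : 'I_(n + n) -> 'M[F]_((n + n).+2)) (t : 'M[F]_((n + n).+2)).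
Variable M : 'M[F]_(n + n).
Hypothesis H : presentation A m X t M.

Let A_subalg := presentation_subalg H.
Let m_ideal : is_ideal A m := (presentation_max H).1.1.
Let X_mul := presentation_struct H.

Lemma hcomb_in_ideal c d : m (hcomb X t 0 c d).
Proof.
have [X_m [t_m _]] := presentation_basis H.
rewrite hcomb0l; apply: (idealD m_ideal); last exact: (idealZ m_ideal _ t_m).
apply: (big_rec m (ideal0 m_ideal)) => i x _ mx.
exact/(idealD m_ideal _ mx)/(idealZ m_ideal)/X_m.
Qed.

Lemma ideal_hcomb y : m y -> exists c d, y = hcomb X t 0 c d.
Proof.
have [_ [_ [_ [span _]]]] := presentation_basis H.
move=> /span [c [d ->]]; exists (\row_i c i), d; rewrite hcomb0l.
by congr (_ + _); apply: eq_bigr => i _; rewrite mxE.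
Qed.

Lemma center_neq0 : t != 0.
Proof.
have [_ [_ [free _]]] := presentation_basis H.
apply/eqP=> t0; have := free (fun _ => 0) 1.
rewrite t0 scaler0 addr0 big1 => [/(_ erefl) [_ /eqP] | i _].
  by rewrite oner_eq0.
exact: scale0r.
Qed.

Lemma center_commutator :
  exists a b, t = X a *m X b - X b *m X a /\ M a b = M b a + 1.
Proof.
have [_ [_ [_ [_ comm]]]] := presentation_basis H.
pose a := lshift n (Ordinal (presentation_n_gt0 H)).
pose b := rshift n (Ordinal (presentation_n_gt0 H)).
have tE : t = X a *m X b - X b *m X a.
  by rewrite comm /Jstd block_mxEur mxE eqxx scale1r.
exists a, b; split=> //.
have : (M a b - M b a - 1) *: t = 0.
  by rewrite !scalerBl scale1r -!X_mul -tE subrr.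
move/eqP; rewrite scaler_eq0 (negbTE center_neq0) orbF subr_eq0 subr_eq.
by move=> /eqP ->; rewrite addrC.
Qed.

Lemma center_annihilator :
  [/\ forall k, t *m X k = 0, forall k, X k *m t = 0 & t *m t = 0].
Proof.
have [a [b [tE Mab]]] := center_commutator.
have assoc i j k r s : M i j * (t *m X k) r s = M j k * (X i *m t) r s.
  have : M i j *: (t *m X k) = M j k *: (X i *m t).
    by rewrite scalemxAl scalemxAr -!X_mul mulmxA.
  by move/matrixP/(_ r s); rewrite !mxE.
have [tXa tXb Xat Xbt] :
    [/\ t *m X a = 0, t *m X b = 0, X a *m t = 0 & X b *m t = 0].
  have eq0 r s : [/\ (t *m X a) r s = 0, (t *m X b) r s = 0,
                     (X a *m t) r s = 0 & (X b *m t) r s = 0].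
    by apply: (heis_assoc_system_eq0 (p := M a a) (s := M b a) (u := M b b));
      rewrite -?Mab; apply: assoc.
  by split; apply/matrixP=> r s; rewrite [RHS]mxE; case: (eq0 r s).
split=> [k | k |].
- by rewrite tE mulmxBl -!mulmxA !X_mul -!scalemxAr Xat Xbt !scaler0 subrr.
- by rewrite tE mulmxBr !mulmxA !X_mul -!scalemxAl tXa tXb !scaler0 subrr.
- by rewrite {2}tE mulmxBr !mulmxA tXa tXb !mul0mx subrr.
Qed.

Lemma hcomb_mul_ideal c d c' d' :
  hcomb X t 0 c d *m hcomb X t 0 c' d' = (c *m M *m c'^T) 0 0 *: t.
Proof.
have [tX Xt tt] := center_annihilator.
have sumX_t (e : 'rV[F]_(n + n)) : (\sum_i e 0 i *: X i) *m t = 0.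
  by rewrite mulmx_suml big1 // => i _; rewrite -scalemxAl Xt scaler0.
have t_sumX (e : 'rV[F]_(n + n)) : t *m (\sum_i e 0 i *: X i) = 0.
  by rewrite mulmx_sumr big1 // => i _; rewrite -scalemxAr tX scaler0.
rewrite !hcomb0l mulmxDl !mulmxDr -!scalemxAr -!scalemxAl sumX_t t_sumX tt.
rewrite !scaler0 !addr0 mulmx_suml.
under eq_bigr => i _ do rewrite mulmx_sumr.
rewrite mxE scaler_suml exchange_big /=.
apply: eq_bigr => j _; rewrite mxE mulr_suml scaler_suml.
apply: eq_bigr => i _; rewrite -scalemxAl -scalemxAr X_mul !scalerA !mxE.
by rewrite mulrAC mulrC mulrA.
Qed.

Lemma hcombM g c d g' c' d' :
  hcomb X t g c d *m hcomb X t g' c' d' =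
  hcomb X t (g * g') (g *: c' + g' *: c)
    (g * d' + g' * d + (c *m M *m c'^T) 0 0).
Proof.
rewrite [hcomb X t g c d]hcombE [hcomb X t g' c' d']hcombE mulmxDl.
rewrite (mulmxDr g%:M) (mulmxDr (hcomb X t 0 c d)) hcomb_mul_ideal.
rewrite !mul_scalar_mx mul_mx_scalar -(hcomb_center X t) scale_scalar_mx.
rewrite -(hcomb_scalar X t) !hcombZ !hcombD.
by congr hcomb; rewrite ?mulr0 ?addr0 ?add0r ?addrA.
Qed.

Lemma ideal_mul_center y : m y -> y *m t = 0.
Proof.
have t1 : hcomb X t 0 0 1 = t by rewrite hcomb_center scale1r.
case/ideal_hcomb => c [d ->]; rewrite -[X in _ *m X]t1 hcomb_mul_ideal.
by rewrite trmx0 mulmx0 mxE scale0r.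
Qed.

Lemma center_mul_ideal y : m y -> t *m y = 0.
Proof.
have t1 : hcomb X t 0 0 1 = t by rewrite hcomb_center scale1r.
case/ideal_hcomb => c [d ->]; rewrite -[X in X *m _]t1 hcomb_mul_ideal.
by rewrite !mul0mx mxE scale0r.
Qed.

Lemma one_notin_ideal : ~ m 1.
Proof.
have [[_ [a [Aa not_ma]]] _] := presentation_max H.
move=> m1; apply: not_ma; rewrite -[a]mul1mx.
exact: (idealMr m_ideal Aa m1).
Qed.

Lemma hcomb_mem g c d : A (hcomb X t g c d).
Proof.
rewrite hcombE -scalemx1; apply: (subalgD A_subalg).
  exact/(subalgZ A_subalg)/(subalg1 A_subalg).
exact/(ideal_sub m_ideal)/hcomb_in_ideal.
Qed.

Lemma hcomb_eq0 g c d : hcomb X t g c d = 0 -> [/\ g = 0, c = 0 & d = 0].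
Proof.
move=> e; have g0 : g = 0.
  apply/eqP/negP => /negP g_neq0; apply: one_notin_ideal.
  have -> : 1 = (- g^-1) *: hcomb X t 0 c d.
    move: e; rewrite hcombE addrC => /eqP; rewrite addr_eq0 => /eqP ->.
    by rewrite scaleNr scalerN opprK -scalemx1 scalerA mulVf // scale1r.
  exact/(idealZ m_ideal)/hcomb_in_ideal.
have [_ [_ [free _]]] := presentation_basis H.
move: e; rewrite g0 hcomb0l => /(free (fun i => c 0 i)) [c0 d0]; split=> //.
by apply/rowP => i; rewrite mxE.
Qed.

Lemma hcomb_inj g c d g' c' d' :
  hcomb X t g c d = hcomb X t g' c' d' -> [/\ g = g', c = c' & d = d'].
Proof.
move=> e; have : hcomb X t g c d + (-1) *: hcomb X t g' c' d' = 0.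
  by rewrite e scaleN1r subrr.
rewrite hcombZ hcombD !mulN1r scaleN1r.
by case/hcomb_eq0 => /subr0_eq -> /subr0_eq -> /subr0_eq ->.
Qed.

Lemma ideal_mul_ideal y y' : m y -> m y' -> exists e, y *m y' = e *: t.
Proof.
move=> /ideal_hcomb [c [d ->]] /ideal_hcomb [c' [d' ->]].
by rewrite hcomb_mul_ideal; eexists.
Qed.

Lemma subalg_mul_center a : A a -> exists e, a *m t = e *: t.
Proof.
have [X_m _] := presentation_basis H.
have [i [j [tE _]]] := center_commutator.
move=> Aa; rewrite {1}tE mulmxBr !mulmxA.
have [e ->] := ideal_mul_ideal (idealMl m_ideal Aa (X_m i)) (X_m j).
have [e' ->] := ideal_mul_ideal (idealMl m_ideal Aa (X_m j)) (X_m i).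
by exists (e - e'); rewrite scalerBl.
Qed.

Lemma annihilator_in_ideal x : A x -> x *m t = 0 -> m x.
Proof.
pose K y := A y /\ y *m t = 0.
have K_ideal : is_ideal A K.
  split; first by move=> y [].
  split; first by split; [exact: subalg0 | rewrite mul0mx].
  split; first by move=> y z [Ay yt] [Az zt]; split;
    [exact: subalgD | rewrite mulmxDl yt zt addr0].
  split; first by move=> c y [Ay yt]; split;
    [exact: subalgZ | rewrite -scalemxAl yt scaler0].
  move=> b y Ab [Ay yt]; split; split; try exact: subalgM.
    by rewrite -mulmxA yt mulmx0.
  have [e be] := subalg_mul_center Ab.
  by rewrite -mulmxA be -scalemxAr yt scaler0.
have K_proper : is_proper_ideal A K.
  split=> //; exists 1; split; first exact: subalg1.
  by case=> _; rewrite mul1mx; apply/eqP/center_neq0.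
have m_K y : m y -> K y.
  move=> my; split; first exact: (ideal_sub m_ideal my).
  exact: ideal_mul_center.
by move=> Ax xt; apply: (presentation_max H).2 K K_proper m_K x (conj Ax xt).
Qed.

Lemma hcomb_onto a : A a -> exists g c d, a = hcomb X t g c d.
Proof.
move=> Aa; have [e ae] := subalg_mul_center Aa.
have : m (a - e%:M).
  apply: annihilator_in_ideal; last by rewrite mulmxBl ae mul_scalar_mx subrr.
  rewrite -scaleN1r -scalemx1; apply: (subalgD A_subalg) => //.
  exact/(subalgZ A_subalg)/(subalgZ A_subalg)/(subalg1 A_subalg).
case/ideal_hcomb => c [d e_m]; exists e, c, d.
by rewrite hcombE -e_m addrC subrK.
Qed.

End Presentation.

Section CongruenceToIsomorphism.

Variables (F : fieldType) (n : nat) (A1 A2 m1 m2 : 'M[F]_((n + n).+2) -> Prop).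
Variables (X1 X2 : 'I_(n + n) -> 'M[F]_((n + n).+2)).
Variables (t1 t2 : 'M[F]_((n + n).+2)) (M1 M2 : 'M[F]_(n + n)).
Hypothesis H1 : presentation A1 m1 X1 t1 M1.
Hypothesis H2 : presentation A2 m2 X2 t2 M2.

Lemma alg_isomorphic_of_congruent C :
  C \in unitmx -> M1 = C *m M2 *m C^T -> alg_isomorphic A1 A2.
Proof.
move=> C_unit M1E.
pose coord (p : F * 'rV[F]_(n + n) * F) := hcomb X1 t1 p.1.1 p.1.2 p.2.
have [co coK] : exists co, cancel coord co.
  apply: (injective_has_left_inverse (0, 0, 0)) => -[[g c] d] [[g' c'] d'].
  by case/(hcomb_inj H1) => /= -> -> ->.
pose f x := let: (g, c, d) := co x in hcomb X2 t2 g (c *m C) d.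
have fE g c d : f (hcomb X1 t1 g c d) = hcomb X2 t2 g (c *m C) d.
  by rewrite /f (coK (g, c, d)).
have onto1 := hcomb_onto H1.
exists f; split; last split; last split; last split; last split; last split.
- by move=> _ /onto1 [g [c [d ->]]]; rewrite fE; exact: (hcomb_mem H2).
- move=> _ _ /onto1 [g [c [d ->]]] /onto1 [g' [c' [d' ->]]].
  rewrite !fE => /(hcomb_inj H2) [-> cC ->].
  by rewrite -(mulmxK C_unit c) cC mulmxK.
- move=> _ /(hcomb_onto H2) [g [c [d ->]]].
  exists (hcomb X1 t1 g (c *m invmx C) d); split; first exact: (hcomb_mem H1).
  by rewrite fE mulmxKV.
- move=> _ _ /onto1 [g [c [d ->]]] /onto1 [g' [c' [d' ->]]].
  by rewrite hcombD !fE hcombD mulmxDl.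
- by move=> a _ /onto1 [g [c [d ->]]]; rewrite hcombZ !fE hcombZ scalemxAl.
- move=> _ _ /onto1 [g [c [d ->]]] /onto1 [g' [c' [d' ->]]].
  rewrite (hcombM H1) !fE (hcombM H2) mulmxDl -!scalemxAl.
  by rewrite M1E !trmx_mul !mulmxA.
- have one1 : 1 = hcomb X1 t1 1 0 0 by rewrite hcomb_scalar.
  by rewrite {1}one1 fE mul0mx hcomb_scalar.
Qed.

End CongruenceToIsomorphism.

Section IsomorphismToCongruence.

Variables (F : fieldType) (n : nat) (A1 A2 m1 m2 : 'M[F]_((n + n).+2) -> Prop).
Variables (X1 X2 : 'I_(n + n) -> 'M[F]_((n + n).+2)).
Variables (t1 t2 : 'M[F]_((n + n).+2)) (M1 M2 : 'M[F]_(n + n)).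
Hypothesis H1 : presentation A1 m1 X1 t1 M1.
Hypothesis H2 : presentation A2 m2 X2 t2 M2.

Variable f : 'M[F]_((n + n).+2) -> 'M[F]_((n + n).+2).
Hypothesis f_A : forall x, A1 x -> A2 (f x).
Hypothesis f_inj : forall x y, A1 x -> A1 y -> f x = f y -> x = y.
Hypothesis f_add : forall x y, A1 x -> A1 y -> f (x + y) = f x + f y.
Hypothesis f_scale : forall (c : F) x, A1 x -> f (c *: x) = c *: f x.
Hypothesis f_mul : forall x y, A1 x -> A1 y -> f (x *m y) = f x *m f y.
Hypothesis f_1 : f 1 = 1.

Let A1_subalg := presentation_subalg H1.
Let m1_ideal : is_ideal A1 m1 := (presentation_max H1).1.1.
Let X1_A i : A1 (X1 i) := ideal_sub m1_ideal ((presentation_basis H1).1 i).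
Let t1_A : A1 t1 := ideal_sub m1_ideal (presentation_basis H1).2.1.

Lemma iso0 : f 0 = 0.
Proof.
by have := f_scale 0 (subalg0 A1_subalg); rewrite !scale0r.
Qed.

Lemma iso_hcomb g c d :
  f (hcomb X1 t1 g c d) = g%:M + \sum_i c 0 i *: f (X1 i) + d *: f t1.
Proof.
have [A_sum f_sum] : A1 (\sum_i c 0 i *: X1 i) /\
    f (\sum_i c 0 i *: X1 i) = \sum_i c 0 i *: f (X1 i).
  apply: (big_rec2 (fun y z => A1 y /\ f y = z)).
    by split; [exact: subalg0 | exact: iso0].
  move=> i y z _ [Ay <-]; have AcX := subalgZ A1_subalg (c 0 i) (X1_A i).
  by split; [exact: subalgD | rewrite f_add // f_scale].
have A_g := subalgZ A1_subalg g (subalg1 A1_subalg).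
have A_d := subalgZ A1_subalg d t1_A.
rewrite /hcomb -scalemx1 !f_add //; last exact: subalgD.
rewrite !f_scale ?f_sum //; last exact: subalg1.
by congr (_ *: _ + _ + _); exact: f_1.
Qed.

Lemma iso_ideal y : m1 y -> m2 (f y).
Proof.
move=> m1y; have A1y := ideal_sub m1_ideal m1y.
have A1yy := subalgM A1_subalg A1y A1y.
have [g [c [d fyE]]] := hcomb_onto H2 (f_A A1y).
have : f (y *m y *m y) = 0.
  have [e yy] := ideal_mul_ideal H1 m1y m1y.
  by rewrite yy -scalemxAl (center_mul_ideal H1 m1y) scaler0 iso0.
rewrite !f_mul // fyE !(hcombM H2) -(hcomb0 X2 t2).
case/(hcomb_inj H2) => /eqP; rewrite !mulf_eq0 !orbb => /eqP g0 _ _.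
by rewrite g0; apply: (hcomb_in_ideal H2).
Qed.

Lemma iso_center : exists2 lam, lam != 0 & f t1 = lam *: t2.
Proof.
have [X1_m _] := presentation_basis H1.
have [a [b [tE _]]] := center_commutator H1.
have fX_m i := iso_ideal (X1_m i).
have [e fab] := ideal_mul_ideal H2 (fX_m a) (fX_m b).
have [e' fba] := ideal_mul_ideal H2 (fX_m b) (fX_m a).
have ft : f t1 = (e - e') *: t2.
  rewrite tE -scaleN1r f_add ?f_scale ?f_mul //; try exact: subalgM.
    by rewrite fab fba scaleN1r -scalerBl.
  exact/(subalgZ A1_subalg)/(subalgM A1_subalg).
exists (e - e') => //; apply: contra_eqN ft => /eqP ->; rewrite scale0r -iso0.
apply/eqP => /(f_inj t1_A (subalg0 A1_subalg)) /eqP.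
by rewrite (negbTE (center_neq0 H1)).
Qed.

Section Coordinates.

Variables (lam : F) (C : 'M[F]_(n + n)) (e : 'I_(n + n) -> F).
Hypotheses (lam_neq0 : lam != 0) (f_t1 : f t1 = lam *: t2).
Hypothesis f_X1 : forall i, f (X1 i) = hcomb X2 t2 0 (row i C) (e i).

Lemma iso_hcombE g c d :
  f (hcomb X1 t1 g c d) = hcomb X2 t2 g (c *m C) (\sum_i c 0 i * e i + d * lam).
Proof.
rewrite iso_hcomb f_t1 scalerA -(hcomb_center X2) -(hcomb_scalar X2 t2).
under eq_bigr => i _ do rewrite f_X1 hcombZ.
rewrite hcomb_sum !hcombD mulmx_sum_row; congr hcomb; rewrite ?add0r ?addr0 //.
by rewrite big1 ?addr0 // => i _; rewrite mulr0.
Qed.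

Lemma iso_scaled_congruence : lam *: M1 = C *m M2 *m C^T.
Proof.
apply/matrixP => i j; rewrite !mxE.
have : f (X1 i *m X1 j) = f (X1 i) *m f (X1 j) by rewrite f_mul.
rewrite (presentation_struct H1) f_scale // f_t1 !f_X1 (hcomb_mul_ideal H2).
rewrite scalerA -!(hcomb_center X2) => /(hcomb_inj H2) [_ _].
rewrite mulrC => ->; rewrite !mxE; apply: eq_bigr => k _; rewrite !mxE.
congr (_ * _).
by apply: eq_bigr => l _; rewrite !mxE.
Qed.

Lemma iso_coord_unitmx : C \in unitmx.
Proof.
rewrite unitmxE unitfE; apply/negP => /det0P [v /eqP v_neq0 vC0]; apply: v_neq0.
pose mu := \sum_i v 0 i * e i.
have : f (hcomb X1 t1 0 v 0) = f (hcomb X1 t1 0 0 (mu / lam)).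
  rewrite !iso_hcombE vC0 mul0mx mul0r addr0 [in RHS]big1 ?add0r ?divfK //.
  by move=> i _; rewrite mxE mul0r.
move/(f_inj (hcomb_mem H1 _ _ _) (hcomb_mem H1 _ _ _)).
by case/(hcomb_inj H1).
Qed.

End Coordinates.

Lemma iso_scaled_congruent :
  exists lam C, [/\ lam != 0, C \in unitmx & lam *: M1 = C *m M2 *m C^T].
Proof.
have [lam lam_neq0 f_t1] := iso_center.
have [u f_X1] : exists u : 'I_(n + n) -> 'rV[F]_(n + n) * F,
    forall i, f (X1 i) = hcomb X2 t2 0 (u i).1 (u i).2.
  apply: (fin_all_exists (P := fun i (p : 'rV[F]_(n + n) * F) =>
    f (X1 i) = hcomb X2 t2 0 p.1 p.2)) => i.
  have [c [d fX]] := ideal_hcomb H2 (iso_ideal ((presentation_basis H1).1 i)).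
  by exists (c, d).
pose C := \matrix_(i, k) (u i).1 0 k.
have rowC i : row i C = (u i).1 by apply/rowP => k; rewrite !mxE.
have f_X1' i : f (X1 i) = hcomb X2 t2 0 (row i C) (u i).2 by rewrite rowC.
exists lam, C; split=> //.
- exact: (iso_coord_unitmx lam_neq0 f_t1 f_X1').
- exact: (iso_scaled_congruence f_t1 f_X1').
Qed.

End IsomorphismToCongruence.

Lemma scaled_congruent_of_alg_isomorphic (F : fieldType) (n : nat)
    (A1 A2 m1 m2 : 'M[F]_((n + n).+2) -> Prop)
    (X1 X2 : 'I_(n + n) -> 'M[F]_((n + n).+2)) (t1 t2 : 'M[F]_((n + n).+2))
    (M1 M2 : 'M[F]_(n + n)) :
  presentation A1 m1 X1 t1 M1 -> presentation A2 m2 X2 t2 M2 ->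
  alg_isomorphic A1 A2 ->
  exists lam C, [/\ lam != 0, C \in unitmx & lam *: M1 = C *m M2 *m C^T].
Proof.
move=> H1 H2 [f [f_A [f_inj [_ [f_add [f_scale [f_mul f_1]]]]]]].
exact: (iso_scaled_congruent H1 H2 f_A f_inj f_add f_scale f_mul f_1).
Qed.

Lemma congruent_of_scaled (F : fieldType) (k : nat) (M1 M2 C : 'M[F]_k) s :
  s != 0 -> C \in unitmx -> s ^+ 2 *: M1 = C *m M2 *m C^T ->
  exists D, D \in unitmx /\ M1 = D *m M2 *m D^T.
Proof.
move=> s_neq0 C_unit sM1; exists (s^-1 *: C).
split; first by rewrite unitmxZ // unitfE invr_eq0.
rewrite linearZ /= -!scalemxAl -scalemxAr scalerA -sM1 !scalerA.
by rewrite -mulrA mulrCA mulrA -expr2 -exprMn mulVf // expr1n scale1r.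
Qed.

Lemma tautological_subalgebra (F : fieldType) (n : nat)
    (A : 'M[F]_((n + n).+2) -> Prop) :
  tautological_algebra A -> subalgebra A.
Proof.
move=> [phi [_ A_assoc]]; split.
- exact/A_assoc/aa_one.
- by move=> x y /A_assoc Ax /A_assoc Ay; apply/A_assoc/aa_add.
- by move=> c x /A_assoc Ax; apply/A_assoc/aa_scale.
- by move=> x y /A_assoc Ax /A_assoc Ay; apply/A_assoc/aa_mul.
Qed.

Unset Implicit Arguments.
Set Strict Implicit.

Theorem lemma3p8 (R : realType) (n : nat) (hn : (0 < n)%N)
    (A1 A2 m1 m2 : 'M[R[i]]_((n + n).+2) -> Prop)
    (X1 X2 : 'I_(n + n) -> 'M[R[i]]_((n + n).+2))
    (t1 t2 : 'M[R[i]]_((n + n).+2))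
    (M1 M2 : 'M[R[i]]_(n + n)) :
  tautological_algebra A1 -> tautological_algebra A2 ->
  is_maximal_ideal A1 m1 -> is_maximal_ideal A2 m2 ->
  symplectic_basis m1 X1 t1 -> symplectic_basis m2 X2 t2 ->
  (forall i j, X1 i *m X1 j = M1 i j *: t1) ->
  (forall i j, X2 i *m X2 j = M2 i j *: t2) ->
  (alg_isomorphic A1 A2 <->
   exists C : 'M[R[i]]_(n + n), C \in unitmx /\ M1 = C *m M2 *m C^T).
Proof.
move=> taut1 taut2 max1 max2 basis1 basis2 struct1 struct2.
have H1 := Presentation hn (tautological_subalgebra taut1) max1 basis1 struct1.
have H2 := Presentation hn (tautological_subalgebra taut2) max2 basis2 struct2.
split=> [iso | [C [C_unit M1E]]]; last first.
  exact: (alg_isomorphic_of_congruent H1 H2 C_unit M1E).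
have [lam [C [lam_neq0 C_unit lamM1]]] :=
  scaled_congruent_of_alg_isomorphic H1 H2 iso.
apply: (congruent_of_scaled (s := sqrtC lam)) C_unit _; last by rewrite sqrtCK.
by rewrite sqrtC_eq0.
Qed.
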